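(* If $T$ is a tournament and $T$ is a subdigraph of an oriented graph $D$, then for any minimum hull set $S$ of $D$ in the two-path convexity, $|S\cap V(T)|\leq 2$.
   Context: A tournament is an orientation of a complete graph; an oriented graph is an orientation of a finite simple graph. The two-path interval function on $D$ is $I_{P_3}(u,v)=\{u,v\}$ together with all vertices $w$ with $(u,w),(w,v)\in A(D)$ or $(v,w),(w,u)\in A(D)$. For $S\subseteq V(D)$, $I_{P_3}(S)=\bigcup_{u,v\in S}I_{P_3}(u,v)$; $C$ is convex if $I_{P_3}(C)=C$; the convex hull of $S$ is the smallest convex set containing $S$; a hull set is a set whose convex hull is $V(D)$, and a minimum hull set is one of minimum size. *)

(* A digraph on a finite vertex type V is given by its arc
   relation a : rel V ((u,v) is an arc iff a u v). *)
From mathcomp Require Import all_boot.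
Set Implicit Arguments. Unset Strict Implicit. Unset Printing Implicit Defensive.

Definition oriented (V : finType) (a : rel V) : Prop :=
  (forall u, ~~ a u u) /\ (forall u v, a u v -> ~~ a v u).

(* T = (W, b) is a subdigraph of D = (V, a): b only uses vertices of W and
   every arc of b is an arc of a. *)
Definition subdigraph (V : finType) (W : {set V}) (b a : rel V) : Prop :=
  (forall u v, b u v -> (u \in W) && (v \in W)) /\ (forall u v, b u v -> a u v).

Definition tournament (V : finType) (W : {set V}) (b : rel V) : Prop :=
  oriented b /\ (forall u v, u \in W -> v \in W -> u != v -> b u v || b v u).

Definition IP3 (V : finType) (a : rel V) (u v : V) : {set V} :=
  [set w | (w == u) || (w == v) || (a u w && a w v) || (a v w && a w u)].

Definition IP3set (V : finType) (a : rel V) (S : {set V}) : {set V} :=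
  \bigcup_(u in S) \bigcup_(v in S) IP3 a u v.

Definition convex (V : finType) (a : rel V) (C : {set V}) : bool :=
  IP3set a C == C.

Definition hull (V : finType) (a : rel V) (S : {set V}) : {set V} :=
  \bigcap_(C : {set V} | convex a C && (S \subset C)) C.

Definition hull_set (V : finType) (a : rel V) (S : {set V}) : bool :=
  hull a S == [set: V].

Definition min_hull_set (V : finType) (a : rel V) (S : {set V}) : Prop :=
  hull_set a S /\ (forall S' : {set V}, hull_set a S' -> #|S| <= #|S'|).

From mathcomp Require Import all_boot.

(* Of any three pairwise adjacent vertices, one lies on a two-path between the
   other two.  So if three vertices of a minimum hull set S were pairwise
   adjacent, as they are inside a tournament, one of them could be removed
   from S without changing its convex hull, contradicting minimality. *)

Lemma hull_setD1_IP3 {V : finType} {a : rel V} {S : {set V}} {x y z : V} :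
  x \in S -> z \in S -> x != y -> z != y -> y \in IP3 a x z ->
  hull a (S :\ y) = hull a S.
Proof.
move=> xS zS xy zy yI; apply: eq_bigl => C.
case cC: (convex a C) => //=; apply/idP/idP; last first.
  by move=> /(subset_trans _)-> //; apply: subsetDl.
move=> SyC; apply/subsetP => w wS.
have [->|wy] := eqVneq w y; last by apply: (subsetP SyC); rewrite !inE wy.
have xC : x \in C by apply: (subsetP SyC); rewrite !inE xy.
have zC : z \in C by apply: (subsetP SyC); rewrite !inE zy.
by rewrite -(eqP cC); apply/bigcupP; exists x => //; apply/bigcupP; exists z.
Qed.

Lemma min_hull_set_notin_IP3 {V : finType} {a : rel V} {S : {set V}}
    {x y z : V} :
  min_hull_set a S -> x \in S -> y \in S -> z \in S -> x != y -> z != y ->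
  y \notin IP3 a x z.
Proof.
move=> [hS minS] xS yS zS xy zy; apply/negP => yI.
have hSy : hull_set a (S :\ y).
  by rewrite /hull_set (hull_setD1_IP3 xS zS xy zy yI).
by have := minS _ hSy; rewrite (cardsD1 y S) yS ltnn.
Qed.

Lemma IP3_adjacent_triple {V : finType} {a : rel V} {x y z : V} :
  a x y || a y x -> a y z || a z y -> a x z || a z x ->
  [\/ y \in IP3 a x z, x \in IP3 a y z | z \in IP3 a x y].
Proof.
rewrite /IP3 => /orP[]xy /orP[]yz /orP[]xz;
  first [ by apply: Or31; rewrite inE ?xy ?yz ?xz /= ?orbT
        | by apply: Or32; rewrite inE ?xy ?yz ?xz /= ?orbT
        | by apply: Or33; rewrite inE ?xy ?yz ?xz /= ?orbT ].
Qed.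

Lemma subdigraph_tournament_adjacent {V : finType} {W : {set V}} {b a : rel V}
    {u v : V} :
  subdigraph W b a -> tournament W b -> u \in W -> v \in W -> u != v ->
  a u v || a v u.
Proof.
move=> [_ ba] [_ bW] uW vW uv.
by case/orP: (bW u v uW vW uv) => /ba ->; rewrite ?orbT.
Qed.

Theorem corollary3 (V : finType) (a : rel V) (W : {set V}) (b : rel V)
  (S : {set V}) :
  oriented a -> subdigraph W b a -> tournament W b ->
  min_hull_set a S -> #|S :&: W| <= 2.
Proof.
move=> _ subT tourT minS; rewrite leqNgt; apply/card_gt2P.
move=> [x [y [z [[]]]]]; rewrite !inE.
move=> /andP[xS xW] /andP[yS yW] /andP[zS zW] [xy yz zx].
have xz : x != z by rewrite eq_sym.
have adj := subdigraph_tournament_adjacent subT tourT.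
case: (IP3_adjacent_triple (adj _ _ xW yW xy) (adj _ _ yW zW yz)
                           (adj _ _ xW zW xz)); apply/negP;
  by apply: (min_hull_set_notin_IP3 minS); rewrite // eq_sym.
Qed.
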